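(* Let $p\geq3$ be a prime and let $1\leq r_1\leq\cdots\leq r_\beta\leq p-1$ be integers with $p\mid\sum_{j=1}^\beta r_j$. Put $H(k)=\sum_{j=1}^{\beta}\left\{\frac{kr_j}{p}\right\}$, where $\{x\}=x-[x]$ denotes the fractional part. Let $1\leq\theta\leq p-1$ be an integer such that $H(k)=1$ for all $1\leq k\leq\theta$. Then $\beta\leq p$ and $\theta\leq\left[\frac{p}{\beta-1}\right]$.
   Context: $[x]$ denotes the integral part of a rational number $x$. *)

From mathcomp Require Import all_boot all_order all_algebra.
Set Implicit Arguments. Unset Strict Implicit. Unset Printing Implicit Defensive.
Import Order.TTheory GRing.Theory Num.Theory.
Local Open Scope ring_scope.

Definition frac (x : rat) : rat := x - (Num.floor x)%:~R.

Definition H (p : nat) (r : seq nat) (k : nat) : rat :=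
  \sum_(x <- r) frac ((k * x)%:R / p%:R).

(* Since H(k) = (sum_j (k r_j mod p)) / p, the hypothesis says that these
   residue sums equal p for 1 <= k <= theta; for k = 1 this gives
   sum_j r_j = p, whence beta <= p.  For theta >= 2 write p = q theta + s
   with 0 < s < theta.  As q theta = -s mod p and s r_j is a unit mod p, the
   residues of q theta r_j and s r_j add up to exactly p, so the residue sum
   at q theta is (beta - 1) p; it is also at most q times the residue sum at
   theta, i.e. q p.  Thus (beta - 1) theta <= q theta <= p. *)

From Pilot Require Import Defs.
From mathcomp Require Import all_boot all_order all_algebra.
From mathcomp Require Import zify lra.
Set Implicit Arguments.
Unset Strict Implicit.
Unset Printing Implicit Defensive.
Import Order.TTheory GRing.Theory Num.Theory.

Definition mod_sum (p : nat) (r : seq nat) (k : nat) : nat :=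
  \sum_(x <- r) (k * x %% p).

Local Open Scope ring_scope.

Lemma frac_ratio_nat (n p : nat) : (0 < p)%N ->
  Defs.frac (n%:R / p%:R) = (n %% p)%:R / p%:R :> rat.
Proof.
move=> p_gt0.
have p_neq0 : (p%:R : rat) != 0 by rewrite pnatr_eq0 -lt0n.
have n_split : (n%:R / p%:R : rat) = (n %/ p)%:R + (n %% p)%:R / p%:R.
  by rewrite {1}(divn_eq n p) natrD natrM mulrDl mulfK.
have rem_ge0 : 0 <= (n %% p)%:R / p%:R :> rat by rewrite divr_ge0 ?ler0n.
have rem_lt1 : (n %% p)%:R / p%:R < 1 :> rat.
  by rewrite ltr_pdivrMr ?ltr0n // mul1r ltr_nat ltn_pmod.
have floor_eq : Num.floor (n%:R / p%:R : rat) = (n %/ p)%:Z.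
  by apply: floor_def; rewrite n_split intrD -!pmulrn; apply/andP; split; lra.
by rewrite /Defs.frac floor_eq n_split -pmulrn addrAC subrr add0r.
Qed.

Lemma H_mod_sum (p : nat) (r : seq nat) (k : nat) : (0 < p)%N ->
  H p r k = (mod_sum p r k)%:R / p%:R.
Proof.
move=> p_gt0; rewrite /H natr_sum mulr_suml.
by apply: eq_bigr => x _; apply: frac_ratio_nat.
Qed.

Lemma mod_sum_H_eq1 (p : nat) (r : seq nat) (k : nat) : (0 < p)%N ->
  H p r k = 1 -> mod_sum p r k = p.
Proof.
move=> p_gt0; rewrite H_mod_sum // => /(congr1 (GRing.mul^~ p%:R)).
by rewrite mulfVK ?pnatr_eq0 -?lt0n // mul1r => /eqP; rewrite eqr_nat => /eqP.
Qed.

Local Close Scope ring_scope.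

Lemma modnD_compl (a b p : nat) :
  p %| a + b -> ~~ (p %| b) -> a %% p + b %% p = p.
Proof.
move=> /dvdnP[c a_b_eq] p_ndvd_b.
have p_gt0 : 0 < p by case: p p_ndvd_b a_b_eq => // /[!dvd0n]; lia.
have b_mod_gt0 : 0 < b %% p by rewrite lt0n.
have /dvdnP[d sum_eq] : p %| a %% p + b %% p.
  by rewrite /dvdn modnDm a_b_eq modnMl.
have := ltn_pmod a p_gt0; have := ltn_pmod b p_gt0.
by move: sum_eq; case: d => [|[|d]]; lia.
Qed.

Lemma modnM_le (a b p : nat) : a * b %% p <= a * (b %% p).
Proof. by rewrite -modnMmr leq_mod. Qed.

Lemma size_le_sum (r : seq nat) : {in r, forall x, 0 < x} ->
  size r <= \sum_(x <- r) x.
Proof.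
move=> r_pos; rewrite -sum1_size big_seq [leqRHS]big_seq.
by apply: leq_sum => x /r_pos.
Qed.

Section ResidueSums.

Variables (p : nat) (r : seq nat).
Hypothesis p_prime : prime p.
Hypothesis r_range : {in r, forall x, 0 < x < p}.

Lemma mod_sum1 : mod_sum p r 1 = \sum_(x <- r) x.
Proof.
rewrite /mod_sum big_seq [RHS]big_seq; apply: eq_bigr => x /r_range x_range.
by rewrite mul1n modn_small //; case/andP: x_range.
Qed.

Lemma mod_sum_mull (q k : nat) : mod_sum p r (q * k) <= q * mod_sum p r k.
Proof.
rewrite /mod_sum big_distrr; apply: leq_sum => x _.
by rewrite -mulnA modnM_le.
Qed.

Lemma mod_sum_compl (k l : nat) : ~~ (p %| l) -> p %| k + l ->
  mod_sum p r k + mod_sum p r l = size r * p.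
Proof.
move=> p_ndvd_l p_dvd_kl.
rewrite /mod_sum -big_split -sum1_size big_distrl big_seq [RHS]big_seq.
apply: eq_bigr => x /r_range /andP[x_gt0 x_ltp].
rewrite /= mul1n; apply: modnD_compl; first by rewrite -mulnDl dvdn_mulr.
by rewrite Euclid_dvdM // negb_or p_ndvd_l gtnNdvd.
Qed.

Lemma size_mul_le_of_mod_sums (theta : nat) : 0 < theta < p ->
  (forall k, 0 < k <= theta -> mod_sum p r k = p) ->
  (size r - 1) * theta <= p.
Proof.
move=> /andP[theta_gt0 theta_ltp] sums_eq_p.
have size_le_p : size r <= p.
  rewrite -(sums_eq_p 1) ?theta_gt0 // mod_sum1 size_le_sum // => x.
  by case/r_range/andP.
have [->|theta_neq1] := eqVneq theta 1; first by lia.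
set q := p %/ theta; set s := p %% theta.
have p_eq : p = q * theta + s by rewrite /q /s -divn_eq.
have s_gt0 : 0 < s.
  rewrite lt0n -/(theta %| p); apply/negP.
  by case/primeP: p_prime => _ /[apply] /orP[] /eqP; lia.
have s_lt_theta : s < theta by rewrite ltn_pmod.
have sum_qtheta : mod_sum p r (q * theta) + p = size r * p.
  rewrite -[X in _ + X](sums_eq_p s) ?s_gt0 ?(ltnW s_lt_theta) //.
  have p_ndvd_s : ~~ (p %| s) by rewrite gtnNdvd // (ltn_trans s_lt_theta).
  by rewrite mod_sum_compl // -p_eq.
have qtheta_le : mod_sum p r (q * theta) <= q * p.
  by have := mod_sum_mull q theta; rewrite (sums_eq_p theta) ?theta_gt0 ?leqnn.
have size_le_q : size r - 1 <= q.
  rewrite -(leq_pmul2r (prime_gt0 p_prime)) mulnBl mul1n leq_subLR.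
  by rewrite -sum_qtheta addnC leq_add2l.
by rewrite (leq_trans (leq_mul size_le_q (leqnn theta))) // leq_divM.
Qed.

Lemma size_ge2_of_sum : \sum_(x <- r) x = p -> 1 < size r.
Proof.
case: r r_range => [|a [|b t]] // range; rewrite ?big_nil ?big_seq1.
  by move=> p0; have := prime_gt0 p_prime; rewrite -p0.
by move=> a_eq; have := range a (mem_head _ _); rewrite a_eq ltnn andbF.
Qed.

End ResidueSums.

Theorem lemma3p13 (p : nat) (r : seq nat) (theta : nat) :
  prime p -> (3 <= p)%N ->
  sorted leq r ->
  all (fun x => (1 <= x <= p - 1)%N) r ->
  (p %| \sum_(x <- r) x)%N ->
  (1 <= theta <= p - 1)%N ->
  (forall k : nat, (1 <= k <= theta)%N -> H p r k = 1%R) ->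
  (size r <= p)%N /\ (theta <= p %/ (size r - 1))%N.
Proof.
move=> p_prime _ _ r_all _ theta_range H_eq1.
have p_gt0 := prime_gt0 p_prime.
have r_range : {in r, forall x, 0 < x < p} by move=> x /(allP r_all); lia.
have theta_ltp : 0 < theta < p by lia.
have sums_eq_p k : 0 < k <= theta -> mod_sum p r k = p.
  by move=> k_range; apply: mod_sum_H_eq1 => //; apply: H_eq1.
have sum_r : \sum_(x <- r) x = p.
  by rewrite -(mod_sum1 r_range) sums_eq_p ?leqnn; lia.
have size_ge2 := size_ge2_of_sum p_prime r_range sum_r.
split; first by rewrite -sum_r size_le_sum // => x /r_range /andP[].
rewrite leq_divRL; last by lia.
by rewrite mulnC (size_mul_le_of_mod_sums p_prime r_range theta_ltp sums_eq_p).
Qed.
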